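(* Let $C$ be a d-cone and let $C^*$ be the cone of all Scott-continuous linear functionals $\mu\colon C\to\overline{\mathbb{R}}_+$ (with pointwise operations), endowed with the weak$^*$ upper topology. Let $C_0$ be a d-dense subcone of $C$. Then for every sublinear functional $\varphi\colon C^*\to\overline{\mathbb{R}}_+$ which is lower semicontinuous with respect to the weak$^*$ upper topology and every $\mu\in C^*$, \[\varphi(\mu)=\sup\{\mu(x)\mid x\in C_0,\ \widehat x\le\varphi\},\] where $\widehat x\le\varphi$ means $\nu(x)\le\varphi(\nu)$ for all $\nu\in C^*$.
   Context: $\overline{\mathbb{R}}_+=[0,+\infty)\cup\{+\infty\}$ with its usual order and extended arithmetic ($r+\infty=+\infty$, $r\cdot\infty=\infty$ for $r>0$, $0\cdot\infty=0$), with the upper topology (open sets $\emptyset$, $\overline{\mathbb{R}}_+$, $]r,+\infty]$ for $r\in[0,\infty)$); lower semicontinuous means continuous for it. A cone is a commutative monoid with a scalar multiplication by $[0,\infty)$ satisfying $r(x+y)=rx+ry$, $(r+s)x=rx+sx$, $(rs)x=r(sx)$, $1x=x$, $0x=0$. A d-cone is a cone with a directed complete partial order such that addition and scalar multiplication $[0,\infty)\times C\to C$ are Scott-continuous (order preserving and preserving suprema of directed families). A d-subcone is a subcone closed under directed suprema in $C$; a subcone $C_0$ is d-dense if the only d-subcone of $C$ containing $C_0$ is $C$. Linear = additive and homogeneous ($\mu(rx)=r\mu(x)$, $r\in[0,\infty)$); sublinear = homogeneous and subadditive. For $x\in C$, $\widehat x\colon C^*\to\overline{\mathbb{R}}_+$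 is $\widehat x(\mu)=\mu(x)$. The weak$^*$ upper topology on $C^*$ is the coarsest topology making every $\widehat x$, $x\in C$, lower semicontinuous. $\sup\emptyset=0$. *)

From Stdlib Require Import Reals List.
Open Scope R_scope.

Definition nnR := {r : R | 0 <= r}.
Definition nnval (r : nnR) : R := proj1_sig r.
Definition nn0 : nnR := exist _ 0 (Rle_refl 0).
Definition nn1 : nnR := exist _ 1 Rle_0_1.
Definition nn_add (r s : nnR) : nnR :=
  exist _ (nnval r + nnval s)
    (Rplus_le_le_0_compat _ _ (proj2_sig r) (proj2_sig s)).
Definition nn_mul (r s : nnR) : nnR :=
  exist _ (nnval r * nnval s) (Rmult_le_pos _ _ (proj2_sig r) (proj2_sig s)).
Definition nn_le (r s : nnR) : Prop := nnval r <= nnval s.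

Inductive ER : Type := ERfin (r : nnR) | ERinf.

Definition ER_le (x y : ER) : Prop :=
  match x, y with
  | ERfin r, ERfin s => nn_le r s
  | _, ERinf => True
  | ERinf, ERfin _ => False
  end.
Definition ER_lt (x y : ER) : Prop := ER_le x y /\ ~ ER_le y x.

Definition ER_add (x y : ER) : ER :=
  match x, y with
  | ERfin r, ERfin s => ERfin (nn_add r s)
  | _, _ => ERinf
  end.

(* r * x, with 0 * oo = 0 *)
Definition ER_scale (r : nnR) (x : ER) : ER :=
  match x with
  | ERfin s => ERfin (nn_mul r s)
  | ERinf => if Req_EM_T (nnval r) 0 then ERfin nn0 else ERinf
  end.

(* v is the supremum (least upper bound) of the set S in [0,+oo];
   note the sup of the empty set is 0 = least element. *)
Definition ER_is_sup (S : ER -> Prop) (v : ER) : Prop :=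
  (forall y, S y -> ER_le y v) /\
  (forall u, (forall y, S y -> ER_le y u) -> ER_le v u).

Definition directed {T : Type} (le : T -> T -> Prop) {I : Type} (f : I -> T) : Prop :=
  inhabited I /\ forall i j, exists k, le (f i) (f k) /\ le (f j) (f k).

Definition is_lub {T : Type} (le : T -> T -> Prop) {I : Type} (f : I -> T) (s : T) : Prop :=
  (forall i, le (f i) s) /\ (forall u, (forall i, le (f i) u) -> le s u).

Definition prod_le {A B : Type} (leA : A -> A -> Prop) (leB : B -> B -> Prop)
  (p q : A * B) : Prop := leA (fst p) (fst q) /\ leB (snd p) (snd q).

Definition scott_cont {A B : Type} (leA : A -> A -> Prop) (leB : B -> B -> Prop)
  (g : A -> B) : Prop :=
  (forall a a', leA a a' -> leB (g a) (g a')) /\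
  (forall (I : Type) (f : I -> A) (s : A),
      directed leA f -> is_lub leA f s -> is_lub leB (fun i => g (f i)) (g s)).

Record Cone : Type := {
  carrier :> Type;
  cadd : carrier -> carrier -> carrier;
  czero : carrier;
  csmul : nnR -> carrier -> carrier;
  cadd_assoc : forall x y z, cadd x (cadd y z) = cadd (cadd x y) z;
  cadd_comm : forall x y, cadd x y = cadd y x;
  cadd_0 : forall x, cadd czero x = x;
  csmul_addr : forall r x y, csmul r (cadd x y) = cadd (csmul r x) (csmul r y);
  csmul_addl : forall r s x, csmul (nn_add r s) x = cadd (csmul r x) (csmul s x);
  csmul_mul : forall r s x, csmul (nn_mul r s) x = csmul r (csmul s x);
  csmul_1 : forall x, csmul nn1 x = x;
  csmul_0 : forall x, csmul nn0 x = czero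
}.

Record DCone : Type := {
  dc_cone :> Cone;
  dle : dc_cone -> dc_cone -> Prop;
  dle_refl : forall x, dle x x;
  dle_trans : forall x y z, dle x y -> dle y z -> dle x z;
  dle_antisym : forall x y, dle x y -> dle y x -> x = y;
  d_complete : forall (I : Type) (f : I -> dc_cone),
      directed dle f -> exists s, is_lub dle f s;
  dadd_scott : scott_cont (prod_le dle dle) dle
                 (fun p : dc_cone * dc_cone => cadd dc_cone (fst p) (snd p));
  dsmul_scott : scott_cont (prod_le nn_le dle) dle
                 (fun p : nnR * dc_cone => csmul dc_cone (fst p) (snd p))
}.

Definition subcone (C : Cone) (P : C -> Prop) : Prop :=
  P (czero C) /\
  (forall x y, P x -> P y -> P (cadd C x y)) /\
  (forall r x, P x -> P (csmul C r x)).

Definition d_subcone (C : DCone) (P : C -> Prop) : Prop :=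
  subcone C P /\
  (forall (I : Type) (f : I -> C) (s : C),
      directed (dle C) f -> (forall i, P (f i)) -> is_lub (dle C) f s -> P s).

Definition d_dense (C : DCone) (P : C -> Prop) : Prop :=
  subcone C P /\
  (forall Q : C -> Prop, d_subcone C Q -> (forall x, P x -> Q x) -> forall x, Q x).

(** * The dual cone C^* (as a predicate on functionals C -> [0,+oo]) *)
Definition linear_fun (C : Cone) (mu : C -> ER) : Prop :=
  (forall x y, mu (cadd C x y) = ER_add (mu x) (mu y)) /\
  (forall r x, mu (csmul C r x) = ER_scale r (mu x)).

Definition in_dual (C : DCone) (mu : C -> ER) : Prop :=
  linear_fun C mu /\ scott_cont (dle C) ER_le mu.

(* Weak* upper topology on C^*: generated by the subbasic opens
   { mu | mu(x) in ]r,+oo] }, x in C, r in [0,+oo).  U (restricted to C^* )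
   is open iff each of its points has a basic neighbourhood (a finite
   intersection of subbasic opens) inside U. *)
Definition weak_open (C : DCone) (U : (C -> ER) -> Prop) : Prop :=
  forall mu, in_dual C mu -> U mu ->
    exists l : list (C * nnR),
      (forall p, In p l -> ER_lt (ERfin (snd p)) (mu (fst p))) /\
      (forall nu, in_dual C nu ->
         (forall p, In p l -> ER_lt (ERfin (snd p)) (nu (fst p))) -> U nu).

(* lower semicontinuity of phi : C^* -> [0,+oo] for the weak* upper topology:
   preimages of the opens ]r,+oo] are open (preimages of {} and of the whole
   space are trivially open). *)
Definition weak_lsc (C : DCone) (phi : (C -> ER) -> ER) : Prop :=
  forall r : nnR, weak_open C (fun mu => ER_lt (ERfin r) (phi mu)).

Definition sublinear_dual (C : DCone) (phi : (C -> ER) -> ER) : Prop :=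
  (forall (r : nnR) mu, in_dual C mu ->
      phi (fun x => ER_scale r (mu x)) = ER_scale r (phi mu)) /\
  (forall mu nu, in_dual C mu -> in_dual C nu ->
      ER_le (phi (fun x => ER_add (mu x) (nu x))) (ER_add (phi mu) (phi nu))).

From Stdlib Require Import Reals List Lra Psatz Classical ProofIrrelevance.
Open Scope R_scope.

(* The inequality [>=] is immediate.  Conversely let [0 < r < phi mu].  Lower semicontinuity
   gives finitely many [x_p], [r_p < mu x_p] such that [phi nu > r] as soon as
   [nu x_p > r_p] for all [p]; suitable multiples [y_p] of the [x_p] then satisfy
   [mu y_p > r] and [min_p nu y_p <= phi nu] for all [nu] in [C^*].  Sublinearity of [phi]
   and a connectedness argument on [[0,1]] allow replacing two of the [y_p] by a convex
   combination of them, so that finally a single [y] satisfies [y^ <= phi] and [mu y > r].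
   The [y] that can be approximated in [mu] by elements of [C0] below them form a d-subcone,
   hence all of [C]; an [x <= y] in [C0] with [mu x > r] is the required element. *)

(** * Arithmetic of [0,+oo] *)

Lemma Rmax0 t : 0 <= t -> Rmax 0 t = t.
Proof. apply Rmax_right. Qed.

Lemma Rdiv_nonneg r t : 0 <= r -> 0 < t -> 0 <= r / t.
Proof. intros; unfold Rdiv; apply Rmult_le_pos; [lra|left; apply Rinv_0_lt_compat; lra]. Qed.

Lemma nn_ext (a b : nnR) : nnval a = nnval b -> a = b.
Proof.
  destruct a as [a ha], b as [b hb]; simpl; intros ->; f_equal; apply proof_irrelevance.
Qed.

Lemma nn_nonneg (a : nnR) : 0 <= nnval a.
Proof. exact (proj2_sig a). Qed.

Definition nn_of (t : R) : nnR := exist _ (Rmax 0 t) (Rmax_l 0 t).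
Arguments nn_of : simpl never.

Lemma nn_of_val t : 0 <= t -> nnval (nn_of t) = t.
Proof. apply Rmax0. Qed.

Lemma ERfin_nn_of (p : nnR) : ERfin p = ERfin (nn_of (nnval p)).
Proof. f_equal; apply nn_ext; rewrite nn_of_val; auto; apply nn_nonneg. Qed.

Ltac dER x := let r := fresh "r" in let h := fresh "h" in destruct x as [[r h]|].
Ltac er_unf := unfold ER_lt, ER_le, ER_add, ER_scale, nn_le, nn_add, nn_mul, nn0, nn1,
  nnval in *; simpl in *.
Ltac er_solve :=
  repeat (match goal with |- context [Req_EM_T ?a ?b] => destruct (Req_EM_T a b) end; simpl);
  auto; try tauto; try lra; try (f_equal; apply nn_ext; simpl; nra); try (exfalso; nra).

Lemma ER_le_refl x : ER_le x x.
Proof. dER x; er_unf; lra. Qed.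

Lemma ER_le_trans x y z : ER_le x y -> ER_le y z -> ER_le x z.
Proof. dER x; dER y; dER z; er_unf; intros; try lra; tauto. Qed.

Lemma ER_le_total x y : ER_le x y \/ ER_le y x.
Proof. dER x; dER y; er_unf; try lra; tauto. Qed.

Lemma ER_le_antisym x y : ER_le x y -> ER_le y x -> x = y.
Proof. dER x; dER y; er_unf; intros; try tauto. f_equal; apply nn_ext; simpl; lra. Qed.

Lemma ER_le_inf x : ER_le x ERinf.
Proof. dER x; er_unf; auto. Qed.

Lemma ER_not_le x y : ~ ER_le x y -> ER_lt y x.
Proof. intros H; split; auto. destruct (ER_le_total x y); tauto. Qed.

Lemma ER_lt_irrefl x : ~ ER_lt x x.
Proof. intros [_ H]; apply H, ER_le_refl. Qed.

Lemma ER_lt_le_trans x y z : ER_lt x y -> ER_le y z -> ER_lt x z.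
Proof.
  intros [H1 H2] H3; split; [eapply ER_le_trans; eauto|].
  intro H4; apply H2; eapply ER_le_trans; eauto.
Qed.

Lemma ER_le_lt_trans x y z : ER_le x y -> ER_lt y z -> ER_lt x z.
Proof.
  intros H1 [H2 H3]; split; [eapply ER_le_trans; eauto|].
  intro H4; apply H3; eapply ER_le_trans; eauto.
Qed.

Lemma ER_lt_fin_inf r : ER_lt (ERfin r) ERinf.
Proof. split; [apply ER_le_inf|simpl; auto]. Qed.

Lemma ER_lt_fin X Y : 0 <= X -> X < Y -> ER_lt (ERfin (nn_of X)) (ERfin (nn_of Y)).
Proof. intros. unfold ER_lt, ER_le, nn_le, nnval, nn_of; simpl. rewrite !Rmax0 by lra. lra. Qed.

Lemma ER_add_comm x y : ER_add x y = ER_add y x.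
Proof. dER x; dER y; er_unf; auto. f_equal; apply nn_ext; simpl; lra. Qed.

Lemma ER_add_assoc x y z : ER_add x (ER_add y z) = ER_add (ER_add x y) z.
Proof. dER x; dER y; dER z; er_unf; auto. f_equal; apply nn_ext; simpl; lra. Qed.

Lemma ER_add_0l x : ER_add (ERfin nn0) x = x.
Proof. dER x; simpl; auto. f_equal; apply nn_ext; simpl; ring. Qed.

Lemma ER_add_inf_r x : ER_add x ERinf = ERinf.
Proof. dER x; reflexivity. Qed.

Lemma ER_add_mono x x' y y' :
  ER_le x x' -> ER_le y y' -> ER_le (ER_add x y) (ER_add x' y').
Proof. dER x; dER x'; dER y; dER y'; er_unf; intros; try lra; tauto. Qed.

Lemma ER_le_add_r x y : ER_le x (ER_add x y).
Proof. dER x; dER y; er_unf; auto; lra. Qed.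

Lemma ER_scale_mono t x y : ER_le x y -> ER_le (ER_scale t x) (ER_scale t y).
Proof. destruct t as [t ht]; dER x; dER y; er_unf; intros; er_solve; nra. Qed.

Lemma ER_scale_add t x y : ER_scale t (ER_add x y) = ER_add (ER_scale t x) (ER_scale t y).
Proof. destruct t as [t ht]; dER x; dER y; er_unf; er_solve. Qed.

Lemma ER_scale_comm t s x : ER_scale t (ER_scale s x) = ER_scale s (ER_scale t x).
Proof. destruct t as [t ht]; destruct s as [s hs]; dER x; er_unf; er_solve. Qed.

Lemma ER_scale_inf t : 0 < nnval t -> ER_scale t ERinf = ERinf.
Proof. destruct t as [t ht]; er_unf; intros; destruct Req_EM_T; auto; lra. Qed.

Lemma ER_scale_0 t x : nnval t = 0 -> ER_scale t x = ERfin nn0.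
Proof.
  destruct t as [t ht]; dER x; er_unf; intros; try destruct Req_EM_T; auto; [|lra].
  f_equal; apply nn_ext; simpl; subst; ring.
Qed.

Lemma ER_scale_1 t x : nnval t = 1 -> ER_scale t x = x.
Proof.
  destruct t as [t ht]; simpl; intros ->. dER x; simpl.
  - f_equal; apply nn_ext; simpl; ring.
  - destruct Req_EM_T; auto; simpl in *; lra.
Qed.

Lemma ER_add_scale_fin al be (b b' : nnR) : 0 <= al -> 0 <= be ->
  ER_add (ER_scale (nn_of al) (ERfin b)) (ER_scale (nn_of be) (ERfin b')) =
  ERfin (nn_of (al * nnval b + be * nnval b')).
Proof.
  intros. destruct b as [b hb], b' as [b' hb']. simpl. f_equal. apply nn_ext.
  unfold nn_add, nn_mul, nnval, nn_of; simpl. rewrite !Rmax0; auto. nra.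
Qed.

Definition ER_mid (s : R) (m : ER) : R :=
  match m with ERfin t => (s + nnval t) / 2 | ERinf => s + 1 end.

Lemma ER_mid_between s m : 0 <= s -> ER_lt (ERfin (nn_of s)) m ->
  s < ER_mid s m /\ ER_lt (ERfin (nn_of (ER_mid s m))) m.
Proof.
  intros Hs H. destruct m as [[t ht]|]; simpl.
  - unfold ER_lt, ER_le, nn_le, nn_of in *; simpl in *. rewrite Rmax0 in * by lra. lra.
  - split; [lra|apply ER_lt_fin_inf].
Qed.

Lemma ER_le_fin X Y : 0 <= X -> X <= Y -> ER_le (ERfin (nn_of X)) (ERfin (nn_of Y)).
Proof. intros. unfold ER_le, nn_le, nnval, nn_of; simpl. rewrite !Rmax0 by lra. lra. Qed.

Lemma ER_lt_scale_iff (r t : nnR) a : 0 < nnval t ->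
  ER_lt (ERfin r) (ER_scale t a) <-> ER_lt (ERfin (nn_of (nnval r / nnval t))) a.
Proof.
  intros Ht. pose proof (nn_nonneg r).
  assert (Hrt : 0 <= nnval r / nnval t) by (apply Rdiv_nonneg; lra).
  assert (nnval r / nnval t * nnval t = nnval r) by (field; lra).
  destruct a as [[b hb]|].
  - destruct r as [r hr], t as [t ht]; simpl in *.
    unfold ER_lt, ER_le, ER_scale, nn_le, nn_mul, nn_of; simpl. rewrite !Rmax0 by lra.
    split; intros [H1 H2]; split; intros; nra.
  - rewrite ER_scale_inf by lra. split; intros; apply ER_lt_fin_inf.
Qed.

Lemma ER_lt_add_split (r : nnR) a b : ER_lt (ERfin r) (ER_add a b) ->
  ER_lt (ERfin r) a \/ ER_lt (ERfin r) b \/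
  exists r1 r2, ER_lt (ERfin r1) a /\ ER_lt (ERfin r2) b /\ nnval r1 + nnval r2 = nnval r.
Proof.
  intros H.
  destruct (classic (ER_le b (ERfin r))) as [Hb|Hb]; [|right; left; apply ER_not_le; auto].
  destruct (classic (ER_le a (ERfin r))) as [Ha|Ha]; [|left; apply ER_not_le; auto].
  right; right. destruct a as [[a ha]|]; [|contradiction].
  destruct b as [[b hb]|]; [|contradiction].
  destruct r as [r hr]. er_unf.
  exists (nn_of ((a - b + r) / 2)), (nn_of ((b - a + r) / 2)).
  unfold ER_lt, ER_le, nn_le, nn_of; simpl. rewrite !Rmax0 by lra. lra.
Qed.

Lemma ER_lt_scale_pos (t : R) (p : nnR) A : 0 < t -> ER_lt (ERfin p) A ->
  ER_lt (ERfin (nn_of (t * nnval p))) (ER_scale (nn_of t) A).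
Proof.
  intros Ht H. pose proof (nn_nonneg p).
  apply ER_lt_scale_iff; rewrite (nn_of_val t) by lra; [lra|].
  rewrite (nn_of_val (t * nnval p)) by nra.
  replace (t * nnval p / t) with (nnval p) by (field; lra).
  now rewrite <- ERfin_nn_of.
Qed.

Lemma ER_lt_add_scale al be (p p' : nnR) A A' :
  0 <= al -> 0 <= be -> 0 < al + be -> ER_lt (ERfin p) A -> ER_lt (ERfin p') A' ->
  ER_lt (ERfin (nn_of (al * nnval p + be * nnval p')))
        (ER_add (ER_scale (nn_of al) A) (ER_scale (nn_of be) A')).
Proof.
  intros Ha Hb Hab HA HA'. pose proof (nn_nonneg p). pose proof (nn_nonneg p').
  destruct (Req_dec al 0) as [->|Ha0].
  { rewrite ER_scale_0, ER_add_0l, Rmult_0_l, Rplus_0_l by (apply nn_of_val; lra).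
    apply ER_lt_scale_pos; auto; lra. }
  destruct (Req_dec be 0) as [->|Hb0].
  { rewrite (ER_scale_0 (nn_of 0)), ER_add_comm, ER_add_0l, Rmult_0_l, Rplus_0_r
      by (apply nn_of_val; lra).
    apply ER_lt_scale_pos; auto; lra. }
  destruct A as [a|]; [|rewrite ER_scale_inf by (rewrite nn_of_val; lra); apply ER_lt_fin_inf].
  destruct A' as [a'|];
    [|rewrite (ER_scale_inf (nn_of be)), ER_add_inf_r by (rewrite nn_of_val; lra);
      apply ER_lt_fin_inf].
  rewrite ER_add_scale_fin by lra. apply ER_lt_fin; [nra|].
  destruct a as [a ha], a' as [a' ha'], p as [p hp], p' as [p' hp'].
  unfold ER_lt, ER_le, nn_le in HA, HA'; simpl in *. nra.
Qed.

Lemma small_factor s d u : 0 < s -> 0 <= d -> 0 < u ->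
  exists del, 0 < del /\ del <= u /\ del * d < s.
Proof.
  intros Hs Hd Hu. set (q := s / (2 * (d + 1))).
  assert (Hq : 0 < q) by (apply Rdiv_lt_0_compat; lra).
  assert (Hqd : q * (2 * (d + 1)) = s) by (unfold q; field; lra).
  exists (Rmin u q). split; [apply Rmin_pos; auto|split; [apply Rmin_l|]].
  pose proof (Rmin_r u q). pose proof (Rmin_pos u q Hu Hq). nra.
Qed.

Lemma ER_lt_add_small (p q : nnR) m : ER_lt (ERfin p) m ->
  exists t, 0 < t /\ ER_lt (ER_add (ERfin p) (ER_scale (nn_of t) (ERfin q))) m.
Proof.
  intros H. destruct m as [[s hs]|].
  - destruct p as [p hp], q as [q hq]; unfold ER_lt, ER_le, nn_le in H; simpl in H.
    destruct (small_factor (s - p) q 1) as [t [? [? ?]]]; try lra.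
    exists t; split; auto. unfold ER_lt, ER_le, nn_le, nn_add, nn_mul; simpl.
    rewrite Rmax0 by lra. lra.
  - exists 1; split; [lra|apply ER_lt_fin_inf].
Qed.

Definition ER_min (x y : ER) : ER :=
  match x, y with
  | ERinf, _ => y
  | _, ERinf => x
  | ERfin r, ERfin s => if Rle_dec (nnval r) (nnval s) then x else y
  end.

Lemma ER_min_le_l x y : ER_le (ER_min x y) x.
Proof. dER x; dER y; unfold ER_min; try (destruct Rle_dec); er_unf; try lra; auto. Qed.

Lemma ER_min_le_r x y : ER_le (ER_min x y) y.
Proof. dER x; dER y; unfold ER_min; try (destruct Rle_dec); er_unf; try lra; auto. Qed.

Lemma ER_le_min z x y : ER_le z x -> ER_le z y -> ER_le z (ER_min x y).
Proof. dER x; dER y; unfold ER_min; try (destruct Rle_dec); auto. Qed.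

Lemma ER_lt_min z x y : ER_lt z x -> ER_lt z y -> ER_lt z (ER_min x y).
Proof. dER x; dER y; unfold ER_min; try (destruct Rle_dec); auto. Qed.

Lemma ER_lt_min_inv z x y : ER_lt z (ER_min x y) -> ER_lt z x /\ ER_lt z y.
Proof. intros H; split; eapply ER_lt_le_trans; eauto using ER_min_le_l, ER_min_le_r. Qed.

Lemma ER_min_inf_r x : ER_min x ERinf = x.
Proof. dER x; reflexivity. Qed.

Lemma ER_min_left_comm x y z : ER_min x (ER_min y z) = ER_min y (ER_min x z).
Proof.
  apply ER_le_antisym; repeat apply ER_le_min;
  eauto using ER_le_trans, ER_min_le_l, ER_min_le_r.
Qed.

Definition min_over {T : Type} (nu : T -> ER) (L : list T) : ER :=
  fold_right (fun y m => ER_min (nu y) m) ERinf L.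

Lemma min_over_cons {T} (nu : T -> ER) x L : min_over nu (x :: L) = ER_min (nu x) (min_over nu L).
Proof. reflexivity. Qed.

Lemma min_over_le_In {T} (nu : T -> ER) L y : In y L -> ER_le (min_over nu L) (nu y).
Proof.
  induction L as [|z L IH]; [intros []|]; rewrite min_over_cons; intros [->|H].
  - apply ER_min_le_l.
  - eapply ER_le_trans; [apply ER_min_le_r|auto].
Qed.

Lemma min_over_mono {T} (nu nu' : T -> ER) L :
  (forall x, ER_le (nu x) (nu' x)) -> ER_le (min_over nu L) (min_over nu' L).
Proof.
  intros H; induction L as [|z L IH]; [apply ER_le_refl|]; rewrite !min_over_cons.
  apply ER_le_min.
  - eapply ER_le_trans; [apply ER_min_le_l|auto].
  - eapply ER_le_trans; [apply ER_min_le_r|auto].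
Qed.

Lemma min_over_add {T} (nu nu' : T -> ER) L :
  ER_le (ER_add (min_over nu L) (min_over nu' L))
        (min_over (fun x => ER_add (nu x) (nu' x)) L).
Proof.
  induction L as [|z L IH]; [apply ER_le_inf|]; rewrite !min_over_cons.
  apply ER_le_min.
  - apply ER_add_mono; apply ER_min_le_l.
  - eapply ER_le_trans; [|exact IH]. apply ER_add_mono; apply ER_min_le_r.
Qed.

Lemma min_over_scale {T} (t : nnR) (nu : T -> ER) L :
  ER_le (ER_scale t (min_over nu L)) (min_over (fun x => ER_scale t (nu x)) L).
Proof.
  induction L as [|z L IH]; [apply ER_le_inf|]; rewrite !min_over_cons.
  apply ER_le_min.
  - apply ER_scale_mono; apply ER_min_le_l.
  - eapply ER_le_trans; [|exact IH]. apply ER_scale_mono; apply ER_min_le_r.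
Qed.

Lemma ER_lub_scale {I : Type} (g : I -> ER) s t :
  is_lub ER_le g s -> is_lub ER_le (fun i => ER_scale t (g i)) (ER_scale t s).
Proof.
  intros [Hub Hl]; split.
  - intros i; apply ER_scale_mono; auto.
  - intros u Hu. destruct (Req_EM_T (nnval t) 0) as [E|E].
    + rewrite ER_scale_0 by auto. dER u; er_unf; auto; lra.
    + assert (tp : 0 < nnval t) by (pose proof (nn_nonneg t); lra).
      dER u; [|apply ER_le_inf].
      assert (Hq : r / nnval t * nnval t = r) by (field; lra).
      assert (Hq0 : 0 <= r / nnval t) by (apply Rdiv_nonneg; lra).
      assert (Hs : ER_le s (ERfin (nn_of (r / nnval t)))).
      { apply Hl. intros i. specialize (Hu i). destruct t as [t ht]. simpl in *.
        dER (g i); er_unf; [|destruct Req_EM_T; simpl in *; [lra|tauto]].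
        rewrite Rmax0 by auto. nra. }
      destruct t as [t ht]; simpl in *. dER s; er_unf; [|tauto].
      rewrite Rmax0 in Hs by auto. nra.
Qed.

Lemma ER_lub_add {I : Type} (g h : I -> ER) a b :
  (forall i j, exists k, ER_le (g i) (g k) /\ ER_le (h j) (h k)) ->
  is_lub ER_le g a -> is_lub ER_le h b ->
  is_lub ER_le (fun i => ER_add (g i) (h i)) (ER_add a b).
Proof.
  intros Hd [Hga Hgl] [Hha Hhl]; split.
  - intros i; apply ER_add_mono; auto.
  - intros u Hu. dER u; [|apply ER_le_inf].
    assert (Hij : forall i j, ER_le (ER_add (g i) (h j)) (ERfin (exist _ r h0))).
    { intros i j. destruct (Hd i j) as [k [H1 H2]]. eapply ER_le_trans; [|apply (Hu k)].
      apply ER_add_mono; auto. }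
    destruct (classic (inhabited I)) as [[j0]|NI].
    + assert (Ha : forall j, ER_le (ER_add a (h j)) (ERfin (exist _ r h0))).
      { intros j. specialize (Hij j j) as Hjj.
        destruct (h j) as [[v hv]|] eqn:Ehj; [|rewrite ER_add_inf_r in Hjj; simpl in Hjj; tauto].
        assert (ER_le a (ERfin (nn_of (r - v)))).
        { apply Hgl. intros i. specialize (Hij i j). rewrite Ehj in Hij.
          dER (g i); er_unf; [|tauto]. rewrite Rmax0; lra. }
        assert (v <= r) by (dER (g j); er_unf; [lra|tauto]).
        dER a; er_unf; [|tauto]. rewrite Rmax0 in H by lra. lra. }
      specialize (Ha j0) as Ha0. dER a; [|simpl in Ha0; tauto].
      assert (ER_le b (ERfin (nn_of (r - r0)))).
      { apply Hhl. intros j. specialize (Ha j). dER (h j); er_unf; [|tauto].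
        rewrite Rmax0; lra. }
      assert (r0 <= r) by (specialize (Ha j0); dER (h j0); er_unf; [lra|tauto]).
      dER b; er_unf; [|tauto]. rewrite Rmax0 in H by lra. lra.
    + assert (ER_le a (ERfin nn0)) by (apply Hgl; intros i; exfalso; apply NI; constructor; auto).
      assert (ER_le b (ERfin nn0)) by (apply Hhl; intros i; exfalso; apply NI; constructor; auto).
      dER a; dER b; er_unf; try tauto. lra.
Qed.

Section DualCone.
Variable C : DCone.

Definition fadd (nu nu' : C -> ER) : C -> ER := fun x => ER_add (nu x) (nu' x).
Definition fscale (t : nnR) (nu : C -> ER) : C -> ER := fun x => ER_scale t (nu x).

Lemma in_dual_scale t nu : in_dual C nu -> in_dual C (fscale t nu).
Proof.
  intros [[Ha Hs] [Hm Hl]]; unfold fscale; split; [split|split].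
  - intros x y; rewrite Ha; apply ER_scale_add.
  - intros r x; rewrite Hs; apply ER_scale_comm.
  - intros a a' H; apply ER_scale_mono; auto.
  - intros I f s Hd Hlub. apply ER_lub_scale, (Hl I f s Hd Hlub).
Qed.

Lemma in_dual_add nu nu' : in_dual C nu -> in_dual C nu' -> in_dual C (fadd nu nu').
Proof.
  intros [[Ha Hs] [Hm Hl]] [[Ha' Hs'] [Hm' Hl']]; unfold fadd; split; [split|split].
  - intros x y; rewrite Ha, Ha', !ER_add_assoc. f_equal.
    rewrite <- !ER_add_assoc. f_equal. apply ER_add_comm.
  - intros r x; rewrite Hs, Hs'; symmetry; apply ER_scale_add.
  - intros a a' H; apply ER_add_mono; auto.
  - intros I f s Hd Hlub. apply ER_lub_add.
    + intros i j. destruct (proj2 Hd i j) as [k [H1 H2]]. exists k; split; auto.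
    + apply (Hl I f s Hd Hlub).
    + apply (Hl' I f s Hd Hlub).
Qed.

Lemma in_dual_mono nu x y : in_dual C nu -> dle C x y -> ER_le (nu x) (nu y).
Proof. intros [_ [Hm _]] H; auto. Qed.

Lemma in_dual_zero nu : in_dual C nu -> nu (czero C) = ERfin nn0.
Proof.
  intros [[_ Hs] _]. rewrite <- (csmul_0 C (czero C)), Hs. apply ER_scale_0. reflexivity.
Qed.

Lemma dle_zero (y : C) : dle C (czero C) y.
Proof.
  destruct (dsmul_scott C) as [Hm _].
  specialize (Hm (nn0, y) (nn1, y)). simpl in Hm.
  rewrite csmul_0, csmul_1 in Hm. apply Hm. split; simpl; [|apply dle_refl].
  unfold nn_le, nn0, nn1; simpl; lra.
Qed.

Lemma dadd_mono (x x' y y' : C) :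
  dle C x x' -> dle C y y' -> dle C (cadd C x y) (cadd C x' y').
Proof. intros; apply (proj1 (dadd_scott C) (x, y) (x', y')). split; auto. Qed.

Lemma dle_addr (x y : C) : dle C x (cadd C x y).
Proof.
  pose proof (dadd_mono _ _ _ _ (dle_refl C x) (dle_zero y)) as H.
  rewrite (cadd_comm _ x (czero C)), cadd_0 in H; auto.
Qed.

Lemma dsmul_mono (t : nnR) (x y : C) : dle C x y -> dle C (csmul C t x) (csmul C t y).
Proof.
  intros; apply (proj1 (dsmul_scott C) (t, x) (t, y)). split; simpl; auto.
  unfold nn_le; lra.
Qed.

End DualCone.

(** * Approximation from a d-dense subcone *)

Section Approximation.
Variables (C : DCone) (C0 : C -> Prop) (mu : C -> ER).
Hypothesis Hmu : in_dual C mu.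

Definition approx_below (y : C) : Prop :=
  forall r : nnR, ER_lt (ERfin r) (mu y) ->
    exists z, C0 z /\ dle C z y /\ ER_lt (ERfin r) (mu z).

Lemma approx_below_zero : approx_below (czero C).
Proof.
  intros r Hr. rewrite (in_dual_zero C mu Hmu) in Hr. destruct r as [r hr]; er_unf. lra.
Qed.

Lemma approx_below_add x y :
  subcone C C0 -> approx_below x -> approx_below y -> approx_below (cadd C x y).
Proof.
  intros [_ [HC0 _]] Qx Qy r Hr. rewrite (proj1 (proj1 Hmu)) in Hr.
  destruct (ER_lt_add_split r _ _ Hr) as [Hx|[Hy|[r1 [r2 [Hx [Hy Hr12]]]]]].
  - destruct (Qx r Hx) as [z [? [? ?]]]. exists z; split; [|split]; auto.
    eapply dle_trans; [eauto|apply dle_addr].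
  - destruct (Qy r Hy) as [z [? [? ?]]]. exists z; split; [|split]; auto.
    eapply dle_trans; [eauto|]. rewrite cadd_comm; apply dle_addr.
  - destruct (Qx r1 Hx) as [z1 [? [? Hz1]]], (Qy r2 Hy) as [z2 [? [? Hz2]]].
    exists (cadd C z1 z2); split; [|split]; [auto|apply dadd_mono; auto|].
    rewrite (proj1 (proj1 Hmu)).
    destruct (mu z1) as [[c1 hc1]|], (mu z2) as [[c2 hc2]|], r1 as [a ha], r2 as [b hb],
      r as [c hc]; simpl in *; er_unf; try tauto. lra.
Qed.

Lemma approx_below_smul t y :
  subcone C C0 -> approx_below y -> approx_below (csmul C t y).
Proof.
  intros [_ [_ HC0]] Qy r Hr. rewrite (proj2 (proj1 Hmu)) in Hr.
  destruct (Req_EM_T (nnval t) 0) as [E|E].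
  { rewrite ER_scale_0 in Hr by auto. destruct r as [r hr]; er_unf; lra. }
  assert (tp : 0 < nnval t) by (pose proof (nn_nonneg t); lra).
  apply (ER_lt_scale_iff _ _ _ tp) in Hr.
  destruct (Qy _ Hr) as [z [? [? Hz]]].
  exists (csmul C t z); split; [|split]; [auto|apply dsmul_mono; auto|].
  rewrite (proj2 (proj1 Hmu)). apply ER_lt_scale_iff; auto.
Qed.

Lemma approx_below_sup (I : Type) (f : I -> C) (s : C) :
  directed (dle C) f -> (forall i, approx_below (f i)) -> is_lub (dle C) f s ->
  approx_below s.
Proof.
  intros Hdir HQ Hlub r Hr.
  destruct (classic (exists i, ~ ER_le (mu (f i)) (ERfin r))) as [[i Hi]|Hn].
  - destruct (HQ i r (ER_not_le _ _ Hi)) as [z [? [? ?]]]. exists z; split; [|split]; auto.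
    eapply dle_trans; eauto. apply (proj1 Hlub).
  - exfalso. apply (proj2 Hr). apply (proj2 (proj2 (proj2 Hmu) I f s Hdir Hlub)).
    intros i. apply NNPP; intro; apply Hn; eauto.
Qed.

Lemma d_dense_approx_below : d_dense C C0 -> forall y, approx_below y.
Proof.
  intros [HC0 Hd]. apply Hd.
  - split; [split; [|split]|].
    + apply approx_below_zero.
    + intros; apply approx_below_add; auto.
    + intros; apply approx_below_smul; auto.
    + apply approx_below_sup.
  - intros x Hx r Hr. exists x; split; [|split]; auto. apply dle_refl.
Qed.

End Approximation.

Definition dominated (C : DCone) (phi : (C -> ER) -> ER) (L : list C) : Prop :=
  forall nu, in_dual C nu -> ER_le (min_over nu L) (phi nu).

Section Sublinear.
Variables (C : DCone) (phi : (C -> ER) -> ER).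
Hypothesis Hsub : sublinear_dual C phi.

Lemma sublinear_scale t nu : in_dual C nu -> phi (fscale C t nu) = ER_scale t (phi nu).
Proof. exact (proj1 Hsub t nu). Qed.

Lemma sublinear_add nu nu' : in_dual C nu -> in_dual C nu' ->
  ER_le (phi (fadd C nu nu')) (ER_add (phi nu) (phi nu')).
Proof. exact (proj2 Hsub nu nu'). Qed.

Lemma sublinear_comb al be nu nu' : in_dual C nu -> in_dual C nu' ->
  ER_le (phi (fadd C (fscale C al nu) (fscale C be nu')))
        (ER_add (ER_scale al (phi nu)) (ER_scale be (phi nu'))).
Proof.
  intros. rewrite <- (sublinear_scale al nu), <- (sublinear_scale be nu') by auto.
  apply sublinear_add; apply in_dual_scale; auto.
Qed.

Lemma dominated_swap y y' L :
  dominated C phi (y :: y' :: L) -> dominated C phi (y' :: y :: L).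
Proof. intros H nu Hnu. rewrite !min_over_cons, ER_min_left_comm. apply H; auto. Qed.

(* Adding [t * nu0] makes [w] infinite while raising [phi] arbitrarily little. *)
Lemma dominated_drop_inf w L nu0 : in_dual C nu0 -> phi nu0 <> ERinf -> nu0 w = ERinf ->
  dominated C phi (w :: L) -> dominated C phi L.
Proof.
  intros Hd0 Hf0 Hw H nu Hnu. apply NNPP; intro Hn. apply ER_not_le in Hn.
  destruct (phi nu) as [p|] eqn:Ep; [|apply (proj2 Hn), ER_le_inf].
  destruct (phi nu0) as [q|] eqn:Eq; [|congruence].
  destruct (ER_lt_add_small p q _ Hn) as [t [tp Ht]].
  set (nu1 := fadd C nu (fscale C (nn_of t) nu0)).
  assert (Hd1 : in_dual C nu1) by (apply in_dual_add, in_dual_scale; auto).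
  assert (Hp1 : ER_le (phi nu1) (ER_add (ERfin p) (ER_scale (nn_of t) (ERfin q)))).
  { rewrite <- Ep, <- Eq, <- sublinear_scale by auto.
    apply sublinear_add; auto; apply in_dual_scale; auto. }
  assert (Hw1 : nu1 w = ERinf).
  { unfold nu1, fadd, fscale. rewrite Hw, ER_scale_inf, ER_add_inf_r; auto.
    rewrite nn_of_val; lra. }
  assert (HL : ER_le (min_over nu L) (min_over nu1 L))
    by (apply min_over_mono; intros; apply ER_le_add_r).
  specialize (H nu1 Hd1). rewrite min_over_cons, Hw1 in H.
  apply (ER_lt_irrefl (phi nu1)).
  eapply ER_le_lt_trans; [exact Hp1|]. eapply ER_lt_le_trans; [exact Ht|].
  eapply ER_le_trans; [exact HL|exact H].
Qed.

End Sublinear.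

Lemma det2_pos lam db dc db' dc' : 0 <= lam <= 1 -> dc <= 0 -> db' <= 0 ->
  0 < lam * db + (1 - lam) * dc -> 0 < lam * db' + (1 - lam) * dc' ->
  0 < db * dc' - dc * db'.
Proof.
  intros Hl Hdc Hdb' H1 H2.
  assert (0 < lam) by (destruct (Req_dec lam 0); [subst; lra|lra]).
  assert (lam < 1) by (destruct (Req_dec lam 1); [subst; lra|lra]).
  set (A := lam * db); set (X := (1 - lam) * (- dc)).
  set (B := (1 - lam) * dc'); set (Y := lam * (- db')).
  assert (0 <= X) by (unfold X; nra). assert (0 <= Y) by (unfold Y; nra).
  assert (A * B > X * B) by (apply Rmult_gt_compat_r; unfold A, B, X, Y in *; lra).
  assert (X * B >= X * Y) by (apply Rle_ge, Rmult_le_compat_l; unfold B, Y in *; lra).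
  apply (Rmult_lt_reg_l (lam * (1 - lam))); [nra|].
  rewrite Rmult_0_r. unfold A, B, X, Y in *. nra.
Qed.

(** * Merging two elements of a dominated list *)

Section Merge.
Variables (C : DCone) (phi : (C -> ER) -> ER).
Hypothesis Hsub : sublinear_dual C phi.
Variables (y y' : C) (L : list C).
Hypothesis Hdom : dominated C phi (y :: y' :: L).

Definition conv (lam : R) : C :=
  cadd C (csmul C (nn_of lam) y) (csmul C (nn_of (1 - lam)) y').

Lemma in_dual_conv lam nu : in_dual C nu ->
  nu (conv lam) = ER_add (ER_scale (nn_of lam) (nu y)) (ER_scale (nn_of (1 - lam)) (nu y')).
Proof. intros [[Ha Hs] _]. unfold conv. rewrite Ha, !Hs. reflexivity. Qed.

Lemma in_dual_conv0 nu : in_dual C nu -> nu (conv 0) = nu y'.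
Proof.
  intros Hnu. rewrite in_dual_conv, ER_scale_0, ER_add_0l by (auto; apply nn_of_val; lra).
  apply ER_scale_1; rewrite nn_of_val; lra.
Qed.

Lemma in_dual_conv1 nu : in_dual C nu -> nu (conv 1) = nu y.
Proof.
  intros Hnu. rewrite in_dual_conv, (ER_scale_0 (nn_of (1 - 1))), ER_add_comm, ER_add_0l
    by (auto; rewrite nn_of_val; lra).
  apply ER_scale_1; rewrite nn_of_val; lra.
Qed.

Definition violation (lam : R) (nu : C -> ER) (p b c : nnR) : Prop :=
  in_dual C nu /\ phi nu = ERfin p /\ nu y = ERfin b /\ nu y' = ERfin c /\
  ER_lt (ERfin p) (min_over nu L) /\ nnval p < lam * nnval b + (1 - lam) * nnval c.

Definition viol_y (lam : R) : Prop :=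
  exists nu p b c, violation lam nu p b c /\ nnval c <= nnval p.

Definition viol_y' (lam : R) : Prop :=
  exists nu p b c, violation lam nu p b c /\ nnval b <= nnval p.

Lemma viol_y'_antitone lam lam' : 0 <= lam' <= lam -> lam <= 1 -> viol_y' lam -> viol_y' lam'.
Proof.
  intros Hl Hl1 [nu [p [b [c [[Hd [Ep [Eb [Ec [HL H2]]]]] H1]]]]].
  exists nu, p, b, c; refine (conj (conj Hd (conj Ep (conj Eb (conj Ec (conj HL _))))) H1).
  pose proof (nn_nonneg p); pose proof (nn_nonneg b); pose proof (nn_nonneg c).
  assert (nnval b < nnval c) by nra.
  assert (0 <= (lam - lam') * (nnval c - nnval b)) by (apply Rmult_le_pos; lra). nra.
Qed.

Lemma viol_y_open lam : 0 <= lam <= 1 -> viol_y lam ->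
  exists del, 0 < del /\ del <= lam /\ viol_y (lam - del).
Proof.
  intros Hl [nu [p [b [c [[Hd [Ep [Eb [Ec [HL H2]]]]] H1]]]]].
  pose proof (nn_nonneg p); pose proof (nn_nonneg b); pose proof (nn_nonneg c).
  assert (0 < lam /\ nnval c < nnval b) as [Hl0 Hbc] by (split; nra).
  destruct (small_factor (lam * nnval b + (1 - lam) * nnval c - nnval p)
              (nnval b - nnval c) lam) as [del [? [? ?]]]; try lra.
  exists del; split; [|split]; auto. exists nu, p, b, c; refine (conj (conj Hd (conj Ep (conj Eb (conj Ec (conj HL _))))) H1). nra.
Qed.

Lemma viol_y'_open lam : 0 <= lam <= 1 -> viol_y' lam ->
  lam < 1 /\ exists del, 0 < del /\ lam + del <= 1 /\ viol_y' (lam + del).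
Proof.
  intros Hl [nu [p [b [c [[Hd [Ep [Eb [Ec [HL H2]]]]] H1]]]]].
  pose proof (nn_nonneg p); pose proof (nn_nonneg b); pose proof (nn_nonneg c).
  assert (lam < 1 /\ nnval b < nnval c) as [Hl0 Hbc] by (split; nra).
  split; auto.
  destruct (small_factor (lam * nnval b + (1 - lam) * nnval c - nnval p)
              (nnval c - nnval b) (1 - lam)) as [del [? [? ?]]]; try lra.
  exists del; split; [|split]; [auto|lra|]. exists nu, p, b, c; refine (conj (conj Hd (conj Ep (conj Eb (conj Ec (conj HL _))))) H1). nra.
Qed.

Lemma viol_y_y'_disjoint lam : 0 <= lam <= 1 -> viol_y lam -> viol_y' lam -> False.
Proof.
  intros Hl [nu [p [b [c [[Hd [Ep [Eb [Ec [HL H2]]]]] H1]]]]]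
    [nu' [p' [b' [c' [[Hd' [Ep' [Eb' [Ec' [HL' H2']]]]] H1']]]]].
  pose proof (nn_nonneg p); pose proof (nn_nonneg b); pose proof (nn_nonneg c).
  pose proof (nn_nonneg p'); pose proof (nn_nonneg b'); pose proof (nn_nonneg c').
  set (db := nnval b - nnval p). set (dc := nnval c - nnval p).
  set (db' := nnval b' - nnval p'). set (dc' := nnval c' - nnval p').
  set (D := db * dc' - dc * db').
  assert (HD : 0 < D) by (apply (det2_pos lam); unfold db, dc, db', dc'; lra).
  assert (Hdc' : 0 < dc') by (unfold db', dc' in *; nra).
  assert (Hdb : 0 < db) by (unfold db, dc in *; nra).
  (* With [al = dc'] and [be = - dc] the excess at [y'] would vanish; adding [D / (1 - db')]
     to [be] and clearing the denominator makes both excesses positive. *)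
  set (al := dc' * (1 - db')). set (be := - dc * (1 - db') + D).
  assert (Hal : 0 < al) by (unfold al, db' in *; nra).
  assert (Hbe : 0 < be) by (unfold be, dc, db' in *; nra).
  set (nu2 := fadd C (fscale C (nn_of al) nu) (fscale C (nn_of be) nu')).
  assert (Hd2 : in_dual C nu2) by (apply in_dual_add; apply in_dual_scale; auto).
  set (P := al * nnval p + be * nnval p').
  assert (Hphi : ER_le (phi nu2) (ERfin (nn_of P))).
  { unfold P. rewrite <- ER_add_scale_fin, <- Ep, <- Ep' by lra.
    apply sublinear_comb; auto. }
  assert (Hy : nu2 y = ERfin (nn_of (P + D))).
  { unfold nu2, fadd, fscale. rewrite Eb, Eb', ER_add_scale_fin by lra.
    do 2 f_equal. unfold P, al, be, D, db, dc, db', dc'. ring. }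
  assert (Hy' : nu2 y' = ERfin (nn_of (P + D * dc'))).
  { unfold nu2, fadd, fscale. rewrite Ec, Ec', ER_add_scale_fin by lra.
    do 2 f_equal. unfold P, al, be, D, db, dc, db', dc'. ring. }
  assert (HL2 : ER_lt (ERfin (nn_of P)) (min_over nu2 L)).
  { eapply ER_lt_le_trans; [|apply min_over_add].
    eapply ER_lt_le_trans; [|apply ER_add_mono; apply min_over_scale].
    apply ER_lt_add_scale; auto; lra. }
  specialize (Hdom nu2 Hd2). rewrite !min_over_cons, Hy, Hy' in Hdom.
  apply (ER_lt_irrefl (phi nu2)). eapply ER_le_lt_trans; [exact Hphi|].
  eapply ER_lt_le_trans; [|exact Hdom].
  assert (0 <= P) by (unfold P; nra).
  apply ER_lt_min; [apply ER_lt_fin; nra|apply ER_lt_min; [apply ER_lt_fin; nra|auto]].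
Qed.

Section FiniteValues.
Hypothesis Hfin : forall nu, in_dual C nu -> phi nu <> ERinf ->
  nu y <> ERinf /\ nu y' <> ERinf.

Lemma conv_violation lam nu : 0 <= lam <= 1 -> in_dual C nu ->
  ~ ER_le (min_over nu (conv lam :: L)) (phi nu) -> viol_y lam \/ viol_y' lam.
Proof.
  intros Hl Hd Hn. apply ER_not_le in Hn. rewrite min_over_cons in Hn.
  destruct (ER_lt_min_inv _ _ _ Hn) as [Hc HL].
  destruct (phi nu) as [p|] eqn:Ep; [|exfalso; apply (proj2 Hc), ER_le_inf].
  destruct (Hfin nu Hd) as [Fb Fc]; [rewrite Ep; discriminate|].
  destruct (nu y) as [b|] eqn:Eb; [|congruence].
  destruct (nu y') as [c|] eqn:Ec; [|congruence].
  rewrite in_dual_conv, Eb, Ec, ER_add_scale_fin in Hc by (auto; lra).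
  pose proof (nn_nonneg p); pose proof (nn_nonneg b); pose proof (nn_nonneg c).
  assert (Hc' : nnval p < lam * nnval b + (1 - lam) * nnval c).
  { unfold ER_lt, ER_le, nn_le, nn_of in Hc; simpl in Hc. unfold nnval in *.
    rewrite Rmax0 in Hc by nra. lra. }
  assert (Hv : violation lam nu p b c) by (repeat (split; [assumption|]); assumption).
  specialize (Hdom nu Hd). rewrite !min_over_cons, Eb, Ec, Ep in Hdom.
  destruct (Rle_dec (nnval c) (nnval p)); [left; exists nu, p, b, c; auto|].
  destruct (Rle_dec (nnval b) (nnval p)); [right; exists nu, p, b, c; auto|].
  exfalso. apply (ER_lt_irrefl (ERfin p)). eapply ER_lt_le_trans; [|exact Hdom].
  apply ER_lt_min; [|apply ER_lt_min; auto];
    destruct p, b, c; unfold ER_lt, ER_le, nn_le; simpl in *; lra.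
Qed.

(* The [lam] violated because of [y'] form an initial segment of [0,1] open on the right,
   those violated because of [y] are open on the left, and the two are disjoint: the
   supremum of the first kind is violated by neither. *)
Lemma dominated_merge_finite :
  exists lam, 0 <= lam <= 1 /\ dominated C phi (conv lam :: L).
Proof.
  set (E := fun l => l = 0 \/ (0 <= l <= 1 /\ viol_y' l)).
  destruct (completeness E) as [m [Hub Hlub]].
  { exists 1. intros l [->|[? ?]]; lra. }
  { exists 0; left; auto. }
  assert (m0 : 0 <= m) by (apply Hub; left; auto).
  assert (m1 : m <= 1) by (apply Hlub; intros l [->|[? ?]]; lra).
  assert (nB : ~ viol_y' m).
  { intro HB. destruct (viol_y'_open m) as [_ [del [? [? ?]]]]; auto.
    assert (m + del <= m) by (apply Hub; right; split; [lra|auto]). lra. }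
  assert (nA : ~ viol_y m).
  { intro HA. destruct (viol_y_open m) as [del [? [? ?]]]; auto.
    assert (exists l, E l /\ m - del < l) as [l [El Hl]].
    { apply NNPP; intro N. assert (m <= m - del); [|lra].
      apply Hlub. intros l El. apply Rnot_lt_le; intro; apply N; eauto. }
    destruct El as [->|[Hl01 HBl]]; [lra|].
    apply (viol_y_y'_disjoint (m - del)); [lra|auto|].
    apply (viol_y'_antitone l); auto; lra. }
  exists m; split; [lra|]. intros nu Hd. apply NNPP; intro Hn.
  destruct (conv_violation m nu) as [?|?]; auto.
Qed.

End FiniteValues.

Lemma dominated_merge : exists lam, 0 <= lam <= 1 /\ dominated C phi (conv lam :: L).
Proof.
  destruct (classic (exists nu0, in_dual C nu0 /\ phi nu0 <> ERinf /\ nu0 y = ERinf))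
    as [[nu0 [H1 [H2 H3]]]|N1].
  { exists 0; split; [lra|]. intros nu Hd. rewrite min_over_cons, in_dual_conv0 by auto.
    apply (dominated_drop_inf C phi Hsub y (y' :: L) nu0); auto. }
  destruct (classic (exists nu0, in_dual C nu0 /\ phi nu0 <> ERinf /\ nu0 y' = ERinf))
    as [[nu0 [H1 [H2 H3]]]|N2].
  { exists 1; split; [lra|]. intros nu Hd. rewrite min_over_cons, in_dual_conv1 by auto.
    apply (dominated_drop_inf C phi Hsub y' (y :: L) nu0); auto.
    apply dominated_swap; auto. }
  apply dominated_merge_finite. intros nu Hd Hf. split; intro E; [apply N1|apply N2]; eauto.
Qed.

End Merge.

(** * Reduction to a single dominated point *)

(* If [phi nu] lay below every [nu y_p], rescaling [nu] would move it into the neighbourhood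
   while keeping [phi] below [r]. *)
Lemma dominated_of_neighbourhood (C : DCone) (phi : (C -> ER) -> ER)
    (r : nnR) (l : list (C * nnR)) (rho : C * nnR -> R) :
  sublinear_dual C phi -> 0 < nnval r ->
  (forall nu, in_dual C nu ->
     (forall p, In p l -> ER_lt (ERfin (snd p)) (nu (fst p))) -> ER_lt (ERfin r) (phi nu)) ->
  (forall p, In p l -> nnval (snd p) < rho p) ->
  dominated C phi (map (fun p => csmul C (nn_of (nnval r / rho p)) (fst p)) l).
Proof.
  intros Hsub Hr Hnbhd Hrho nu Hnu.
  set (Y := map (fun p => csmul C (nn_of (nnval r / rho p)) (fst p)) l).
  apply NNPP; intro Hn. apply ER_not_le in Hn.
  destruct (phi nu) as [q|] eqn:Eq; [|apply (proj2 Hn), ER_le_inf].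
  rewrite ERfin_nn_of in Hn. destruct (ER_mid_between _ _ (nn_nonneg q) Hn) as [Hq Hq'].
  set (q' := ER_mid (nnval q) (min_over nu Y)) in *.
  assert (Hq'0 : 0 < q') by (pose proof (nn_nonneg q); lra).
  assert (Hrq' : 0 < nnval r / q') by (apply Rdiv_lt_0_compat; lra).
  assert (Hphi1 : ER_lt (ERfin r) (phi (fscale C (nn_of (nnval r / q')) nu))).
  { apply Hnbhd; [apply in_dual_scale; auto|]. intros p Hp.
    pose proof (nn_nonneg (snd p)). pose proof (Hrho p Hp).
    assert (Hrr : 0 < nnval r / rho p) by (apply Rdiv_lt_0_compat; lra).
    assert (Hy : ER_le (min_over nu Y) (nu (csmul C (nn_of (nnval r / rho p)) (fst p))))
      by (apply min_over_le_In, (in_map (fun p => _) l p Hp)).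
    pose proof (ER_lt_le_trans _ _ _ Hq' Hy) as Hlt.
    rewrite (proj2 (proj1 Hnu)), ER_lt_scale_iff in Hlt by (rewrite nn_of_val; lra).
    rewrite ERfin_nn_of. unfold fscale. apply ER_lt_scale_iff; rewrite nn_of_val by lra; [lra|].
    eapply ER_le_lt_trans; [|exact Hlt]. rewrite !nn_of_val by lra.
    apply ER_le_fin; [apply Rdiv_nonneg; lra|].
    replace (q' / (nnval r / rho p)) with (rho p * (q' / nnval r)) by (field; lra).
    replace (nnval (snd p) / (nnval r / q')) with (nnval (snd p) * (q' / nnval r))
      by (field; lra).
    apply Rmult_le_compat_r; [apply Rdiv_nonneg|]; lra. }
  rewrite sublinear_scale, Eq, ER_lt_scale_iff in Hphi1 by (auto; rewrite nn_of_val; lra).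
  rewrite nn_of_val in Hphi1 by lra.
  replace (nnval r / (nnval r / q')) with q' in Hphi1 by (field; lra).
  destruct Hphi1 as [_ Hphi1]. apply Hphi1.
  unfold ER_le, nn_le, nn_of; simpl. rewrite Rmax0; lra.
Qed.

Section Main.
Variables (C : DCone) (phi : (C -> ER) -> ER) (mu : C -> ER).
Hypotheses (Hsub : sublinear_dual C phi) (Hlsc : weak_lsc C phi) (Hmu : in_dual C mu).

Definition above (r : nnR) (L : list C) : Prop := forall z, In z L -> ER_lt (ERfin r) (mu z).

Lemma above_conv r y y' L lam : 0 <= lam <= 1 ->
  above r (y :: y' :: L) -> above r (conv C y y' lam :: L).
Proof.
  intros Hl H z [<-|Hz]; [|apply H; simpl; auto].
  rewrite in_dual_conv by auto.
  replace (ERfin r) with (ERfin (nn_of (lam * nnval r + (1 - lam) * nnval r))).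
  - apply ER_lt_add_scale; try lra; apply H; simpl; auto.
  - pose proof (nn_nonneg r). f_equal; apply nn_ext; rewrite nn_of_val; [ring|nra].
Qed.

Lemma dominated_collapse r L : forall y, dominated C phi (y :: L) -> above r (y :: L) ->
  exists z, dominated C phi (z :: nil) /\ ER_lt (ERfin r) (mu z).
Proof.
  induction L as [|y' L IH]; intros y Hdom Habove; [exists y; split; auto; apply Habove; simpl; auto|].
  destruct (dominated_merge C phi Hsub y y' L Hdom) as [lam [Hl Hm]].
  apply (IH (conv C y y' lam)); auto. apply above_conv; auto.
Qed.

Lemma lsc_dominated (r : nnR) : 0 < nnval r -> ER_lt (ERfin r) (phi mu) ->
  exists y L, dominated C phi (y :: L) /\ above r (y :: L).
Proof.
  intros Hr Hphi. destruct (Hlsc r mu Hmu Hphi) as [l [Hl Hnbhd]].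
  set (rho := fun p : C * nnR => ER_mid (nnval (snd p)) (mu (fst p))).
  assert (Hrho : forall p, In p l ->
    nnval (snd p) < rho p /\ ER_lt (ERfin (nn_of (rho p))) (mu (fst p))).
  { intros p Hp. apply ER_mid_between; [apply nn_nonneg|]. rewrite <- ERfin_nn_of; auto. }
  pose proof (dominated_of_neighbourhood C phi r l rho Hsub Hr Hnbhd
                (fun p Hp => proj1 (Hrho p Hp))) as Hdom.
  destruct (map (fun p => csmul C (nn_of (nnval r / rho p)) (fst p)) l) as [|y L] eqn:EL.
  - exfalso. assert (Hz : ER_lt (ERfin r) (phi (fscale C nn0 mu))).
    { apply Hnbhd; [apply in_dual_scale; auto|]. intros p Hp.
      destruct l; simpl in *; [tauto|discriminate]. }
    rewrite sublinear_scale, ER_scale_0 in Hz by auto.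
    destruct r as [r hr]; unfold ER_lt, ER_le, nn_le in Hz; simpl in *; lra.
  - exists y, L; split; auto. rewrite <- EL. intros z Hz.
    apply in_map_iff in Hz. destruct Hz as [p [<- Hp]]. destruct (Hrho p Hp) as [Hp1 Hp2].
    pose proof (nn_nonneg (snd p)).
    assert (Hrr : 0 < nnval r / rho p) by (apply Rdiv_lt_0_compat; lra).
    rewrite (proj2 (proj1 Hmu)), ER_lt_scale_iff, nn_of_val by (try rewrite nn_of_val; lra).
    replace (nnval r / (nnval r / rho p)) with (rho p) by (field; lra). auto.
Qed.

End Main.

Lemma dense_point_above (C : DCone) (C0 : C -> Prop) (phi : (C -> ER) -> ER) (mu : C -> ER)
    (r : nnR) :
  d_dense C C0 -> sublinear_dual C phi -> weak_lsc C phi -> in_dual C mu ->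
  0 < nnval r -> ER_lt (ERfin r) (phi mu) ->
  exists x, C0 x /\ (forall nu, in_dual C nu -> ER_le (nu x) (phi nu)) /\
            ER_lt (ERfin r) (mu x).
Proof.
  intros Hdd Hsub Hlsc Hmu Hr Hphi.
  destruct (lsc_dominated C phi mu Hsub Hlsc Hmu r Hr Hphi) as [y [L [Hdom Habove]]].
  destruct (dominated_collapse C phi mu Hsub Hmu r L y Hdom Habove) as [z [Hz Hmuz]].
  destruct (d_dense_approx_below C C0 mu Hmu Hdd z r Hmuz) as [x [Hx0 [Hxz Hmux]]].
  exists x; split; [|split]; auto. intros nu Hnu.
  eapply ER_le_trans; [apply (in_dual_mono C nu x z Hnu Hxz)|].
  specialize (Hz nu Hnu). rewrite min_over_cons in Hz. simpl in Hz.
  rewrite ER_min_inf_r in Hz. exact Hz.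
Qed.

Theorem corollary5p3 (C : DCone) (C0 : C -> Prop) :
  d_dense C C0 ->
  forall phi : (C -> ER) -> ER,
    sublinear_dual C phi -> weak_lsc C phi ->
    forall mu : C -> ER, in_dual C mu ->
      ER_is_sup
        (fun v => exists x, C0 x /\
                   (forall nu, in_dual C nu -> ER_le (nu x) (phi nu)) /\
                   v = mu x)
        (phi mu).
Proof.
  intros Hdd phi Hsub Hlsc mu Hmu. split.
  - intros v [x [_ [Hx ->]]]. apply Hx; auto.
  - intros u Hu. apply NNPP; intro Hn. apply ER_not_le in Hn.
    destruct u as [s|]; [|apply (proj2 Hn), ER_le_inf].
    rewrite ERfin_nn_of in Hn. pose proof (nn_nonneg s).
    destruct (ER_mid_between _ _ (nn_nonneg s) Hn) as [Hs Hr].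
    destruct (dense_point_above C C0 phi mu (nn_of (ER_mid (nnval s) (phi mu))))
      as [x [Hx0 [Hx Hmux]]]; auto; [rewrite nn_of_val; lra|].
    apply (ER_lt_irrefl (mu x)). eapply ER_le_lt_trans; [apply Hu; eauto|].
    eapply ER_le_lt_trans; [|exact Hmux]. rewrite ERfin_nn_of. apply ER_le_fin; lra.
Qed.
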